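(* Let $((A,\to),\mathrm{obs})$ be a quantitative abstract rewriting system with $\mathrm{obs}:A\to S$, and let $\rightsquigarrow\ \subseteq\ \to$ be a subrelation. Let $t\in A$ and assume: (i) $\rightsquigarrow$ is asymptotically complete for $\to$; (ii) $\mathrm{Lim}(t,\rightsquigarrow)$ contains a unique element, i.e. $\mathrm{Lim}(t,\rightsquigarrow)=\{\mathbf p\}$ for some $\mathbf p\in S$. Then (1) $[\![t]\!]$ is defined, and (2) every maximal $\rightsquigarrow$-sequence from $t$ has limit $[\![t]\!]$, i.e. $t\rightsquigarrow^{\mathrm{obs}}[\![t]\!]$ along each such sequence.
   Context: An abstract rewriting system (ARS) is a pair $(A,\to)$ with $\to\subseteq A\times A$. A $\to$-sequence from $t$ is a finite or infinite sequence $t=t_0\to t_1\to t_2\to\cdots$; it is maximal if it is infinite or ends in a $\to$-normal form (an element with no $\to$-successor); by convention a maximal sequence ending in a normal form $u$ is continued as the constant sequence $u,u,\dots$. An $\omega$-cpo is a poset $(S,\le)$ with least element $\bot$ in which every $\omega$-chain has a supremum. A quantitative ARS (QARS) is $((A,\to),\mathrm{obs})$ where $\mathrm{obs}:A\to S$ maps into an $\omega$-cpo and $t\to s$ implies $\mathrm{obs}(t)\le\mathrm{obs}(s)$. For a relation $R\subseteq\to$ write $t\,R^{\mathrm{obs}}\,\mathbf p$ if there is a maximal $R$-sequence $(t_n)_n$ from $t$ with $\sup_n\mathrm{obs}(t_n)=\mathbf p$; $\mathrm{Lim}(t,R)=\{\mathbf p\mid t\,R^{\mathrm{obs}}\,\mathbf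 p\}$. $[\![t]\!]$ denotes the greatest element of $\mathrm{Lim}(t,\to)$, and is said to be defined when this greatest element exists. A subrelation $\rightsquigarrow\subseteq\to$ is asymptotically complete for $\to$ if for all $t\in A$: $t\to^{\mathrm{obs}}\mathbf q$ implies $t\rightsquigarrow^{\mathrm{obs}}\mathbf p$ for some $\mathbf p$ with $\mathbf q\le\mathbf p$. *)

From HB Require Import structures.
From mathcomp Require Import all_boot all_order.
Set Implicit Arguments. Unset Strict Implicit. Unset Printing Implicit Defensive.
Import Order.TTheory.
Local Open Scope order_scope.

Section QARS.

Context {d : Order.disp_t} {S : bPOrderType d}.

Definition omega_chain (c : nat -> S) : Prop := forall n, c n <= c n.+1.

Definition is_sup (c : nat -> S) (s : S) : Prop :=
  (forall n, c n <= s) /\ (forall u, (forall n, c n <= u) -> s <= u).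

Definition omega_cpo : Prop :=
  forall c : nat -> S, omega_chain c -> exists s, is_sup c s.

Definition is_greatest (P : S -> Prop) (g : S) : Prop :=
  P g /\ (forall p, P p -> p <= g).

Context {A : Type}.

Definition normal_form (R : A -> A -> Prop) (a : A) : Prop := forall b, ~ R a b.

(* A maximal R-sequence from t, represented as an infinite sequence: every
   step is an R-step, except that once an R-normal form is reached the
   sequence continues constantly (the paper's convention). *)
Definition maximal_seq (R : A -> A -> Prop) (t : A) (f : nat -> A) : Prop :=
  f 0 = t /\
  (forall n, R (f n) (f n.+1) \/ (normal_form R (f n) /\ f n.+1 = f n)).

Definition is_QARS (step : A -> A -> Prop) (obs : A -> S) : Prop :=
  omega_cpo /\ (forall a b, step a b -> obs a <= obs b).

Definition obs_lim (obs : A -> S) (R : A -> A -> Prop) (t : A) (p : S) : Prop :=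
  exists f, maximal_seq R t f /\ is_sup (fun n => obs (f n)) p.

Definition Lim (obs : A -> S) (t : A) (R : A -> A -> Prop) : S -> Prop :=
  fun p => obs_lim obs R t p.

Definition sem_is (obs : A -> S) (step : A -> A -> Prop) (t : A) (q : S) : Prop :=
  is_greatest (Lim obs t step) q.

Definition asymptotically_complete (obs : A -> S)
  (rs step : A -> A -> Prop) : Prop :=
  forall t q, obs_lim obs step t q ->
    exists p, obs_lim obs rs t p /\ q <= p.

End QARS.

(* A maximal ~>-sequence is either an infinite ~>-path, hence a maximal
   ->-sequence, or a finite ~>-path to a ~>-normal form, which can be
   prolonged into a maximal ->-sequence; by monotonicity of obs the limit can
   only grow. So the unique ~>-limit p is below some ->-limit, while
   asymptotic completeness puts every ->-limit below p: p is the greatest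
   ->-limit, and it is the limit of every maximal ~>-sequence. *)
From HB Require Import structures.
From mathcomp Require Import all_boot all_order.
From Stdlib Require Import ClassicalEpsilon Wf_nat.
Set Implicit Arguments. Unset Strict Implicit.
Local Open Scope order_scope.
Import Order.POrderTheory.

Section Suprema.
Context {d : Order.disp_t} {S : bPOrderType d}.

Lemma is_sup_unique (c : nat -> S) s1 s2 : is_sup c s1 -> is_sup c s2 -> s1 = s2.
Proof.
by move=> [ub1 least1] [ub2 least2]; apply/le_anti; rewrite least1 ?least2.
Qed.

Lemma is_sup_le (c1 c2 : nat -> S) s1 s2 :
  is_sup c1 s1 -> is_sup c2 s2 -> (forall m, exists k, c1 m <= c2 k) ->
  s1 <= s2.
Proof.
move=> [_ least1] [ub2 _] dom; apply: least1 => m.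
by have [k /le_trans] := dom m; apply.
Qed.

End Suprema.

Section MaximalSequences.
Context {A : Type} (R : A -> A -> Prop).

Lemma exists_maximal_seq (a : A) : exists f, maximal_seq R a f.
Proof.
have [next hnext] : exists next : A -> A,
    forall x, R x (next x) \/ (normal_form R x /\ next x = x).
  apply: (ClassicalEpsilon.choice (fun x y => R x y \/ (normal_form R x /\ y = x))).
  move=> x; case: (classic (exists y, R x y)) => [[y Rxy] | noR].
    by exists y; left.
  by exists x; right; split => // y Rxy; apply: noR; exists y.
by exists (fun n => iter n next a); split => // n; rewrite iterS.
Qed.

Lemma maximal_seq_const (t : A) f n m : maximal_seq R t f ->
  normal_form R (f n) -> (n <= m)%N -> f m = f n.
Proof.
move=> [_ hf] nf; elim: m => [|m IH]; first by rewrite leqn0 => /eqP ->.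
rewrite leq_eqVlt => /orP [/eqP <- // | /IH fm].
by case: (hf m) => [| [_ ->] //]; rewrite fm => /nf.
Qed.

Lemma maximal_seqP (t : A) f : maximal_seq R t f ->
  (forall n, R (f n) (f n.+1)) \/
  exists n, (forall k, (k < n)%N -> R (f k) (f k.+1)) /\ normal_form R (f n).
Proof.
move=> [_ hf]; case: (classic (exists n, ~ R (f n) (f n.+1))) => [stuck | noStuck].
  right; have [n [[notR least] _]] := dec_inh_nat_subset_has_unique_least_element
    _ (fun n => classic (~ R (f n) (f n.+1))) stuck.
  exists n; split; last by case: (hf n) => [/notR | []].
  move=> k kn; apply: NNPP => notRk.
  by have /leP := least k notRk; rewrite leqNgt kn.
by left => n; apply: NNPP => notR; apply: noStuck; exists n.
Qed.

Lemma maximal_seq_splice (t : A) f g n :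
  f 0 = t -> (forall k, (k < n)%N -> R (f k) (f k.+1)) ->
  maximal_seq R (f n) g ->
  maximal_seq R t (fun k => if (k < n)%N then f k else g (k - n)).
Proof.
move=> f0 path [g0 hg]; split.
  by case: ltnP => // /[!leqn0] /eqP n0; rewrite sub0n g0 n0.
move=> k; case: (ltngtP k.+1 n) => [kn | nk | Skn].
- by left; apply/path/ltnW.
- by rewrite subSn.
- by rewrite Skn subnn g0 -Skn; left; apply: path; rewrite -Skn.
Qed.

End MaximalSequences.

Section Limits.
Context {d : Order.disp_t} {S : bPOrderType d} {A : Type}.
Variables (step : A -> A -> Prop) (obs : A -> S).
Hypothesis hQ : is_QARS step obs.

Lemma obs_chain (R : A -> A -> Prop) t f :
  (forall a b, R a b -> step a b) -> maximal_seq R t f ->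
  omega_chain (fun n => obs (f n)).
Proof.
move=> sub [_ hf] n.
by case: (hf n) => [/sub/(proj2 hQ) // | [_ ->]].
Qed.

Lemma exists_obs_lim (R : A -> A -> Prop) t f :
  (forall a b, R a b -> step a b) -> maximal_seq R t f ->
  exists p, is_sup (fun n => obs (f n)) p /\ obs_lim obs R t p.
Proof.
move=> sub hf; have [p sup_p] := proj1 hQ _ (obs_chain sub hf).
by exists p; split => //; exists f.
Qed.

Lemma obs_lim_below_step_lim (R : A -> A -> Prop) t p :
  (forall a b, R a b -> step a b) -> obs_lim obs R t p ->
  exists q, obs_lim obs step t q /\ p <= q.
Proof.
move=> sub [f [hf sup_p]].
case: (maximal_seqP hf) => [path | [n [path nf]]].
  exists p; split => //; exists f; split => //.
  by split; [exact: hf.1 | left; apply: sub].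
have [g hg] := exists_maximal_seq step (f n).
have hh := maximal_seq_splice hf.1 (fun k kn => sub _ _ (path k kn)) hg.
have [q [sup_q lim_q]] := exists_obs_lim (fun a b => id) hh.
exists q; split => //; apply: (is_sup_le sup_p sup_q) => m.
case: (ltnP m n) => [mn | nm]; first by exists m; rewrite mn.
by exists n; rewrite ltnn subnn hg.1 (maximal_seq_const hf nf nm).
Qed.

End Limits.

Theorem mainTheorem1 (d : Order.disp_t) (S : bPOrderType d) (A : Type)
  (step rs : A -> A -> Prop) (obs : A -> S)
  (hQ : is_QARS step obs)
  (hsub : forall a b, rs a b -> step a b)
  (t : A)
  (hcomp : asymptotically_complete obs rs step)
  (huniq : exists p, forall q, Lim obs t rs q <-> q = p) :
  exists sem : S, sem_is obs step t sem /\
    (forall f, maximal_seq rs t f -> is_sup (fun n => obs (f n)) sem).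
Proof.
have [p lim_rsE] := huniq.
have upper_p : forall q, obs_lim obs step t q -> q <= p.
  by move=> q /hcomp [p' [/lim_rsE -> //]].
have lim_p : obs_lim obs rs t p by apply/lim_rsE.
exists p; split.
  split => //; have [q [lim_q pq]] := obs_lim_below_step_lim hQ hsub lim_p.
  by rewrite /Lim (@le_anti _ _ p q) ?pq ?upper_p.
move=> f hf; have [s [sup_s lim_s]] := exists_obs_lim hQ hsub hf.
by rewrite -(lim_rsE s).1.
Qed.
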